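(* Let $F$ be WORDER or WMAJORITY with weights $w_1\ge\dots\ge w_n>0$. If SMO-GP-single on MO-$F$ is started with a non-redundant initial tree, then its expected optimization time is $O(n^3)$.
   Context: Fix an integer $n\ge 1$ and real weights $w_1\ge w_2\ge\dots\ge w_n>0$. The terminal set is $T=\{x_1,\bar x_1,\dots,x_n,\bar x_n\}$ ($\bar x_i$ is the complement of $x_i$; $x_i$ is called positive). A syntax tree is either the empty tree or a rooted ordered binary tree whose inner nodes are all labelled by the binary function $J$ (join, exactly two ordered children) and whose leaves are labelled by elements of $T$. The complexity $C(X)$ is the number of nodes of $X$ (0 for the empty tree). The leaf list $l$ of $X$ is the sequence of leaf labels in an inorder traversal. WORDER: build a list $S$ by scanning $l$ from front to rear and appending a literal only if neither it nor its complement is already in $S$; WORDER$(X)=\sum_{i:\,x_i\in S} w_i$; the expressed variables are the $x_i\in S$. WMAJORITY: WMAJORITY$(X)=\sum w_i$ over all $i$ such that $x_i$ occurs in $l$ at least once and at least as often as $\bar x_i$; these $x_i$ are the expressed variables. A tree is non-redundant if it is empty or if, with $k$ its number of expressed variables, its complexity is $2k-1$. MO-$F(X)=(F(X),C(X))$, $F$ maximized and $C$ minimized. Mutation (one HVL-Prime application): choose uniformly at random one of three operations. Substitute: replace a uniformly random leaf by a uniformly random $u\in T$. Insert: choose a uniformly random node $v$ and uniformly random $u\in T$, replace $v$ by a $J$-node with children $u$ and $v$ in uniformly random order (inserting into the empty tree yields the single leaf $u$). Delete: choose a uniformly random leaf $v$ with parent $p$ and sibling $u$, replace $p$ by $u$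 (deleting $p$ and $v$; deleting the only leaf of a one-leaf tree yields the empty tree). Dominance: $Y\succeq X$ iff $F(Y)\ge F(X)$ and $C(Y)\le C(X)$; $Y\succ X$ iff $Y\succeq X$ and ($F(Y)>F(X)$ or $C(Y)<C(X)$). A tree is Pareto optimal if no tree dominates it; the Pareto front is the set of objective vectors of Pareto optimal trees. SMO-GP-single: choose an initial tree $X$ and set $P:=\{X\}$; repeat: choose $X\in P$ uniformly at random, let $Y$ be $X$ after one HVL-Prime application; if no $Z\in P$ satisfies $Z\succ Y$, set $P:=(P\setminus\{Z\in P: Y\succeq Z\})\cup\{Y\}$. Expected optimization time: expected number of iterations until the population contains, for every objective vector in the Pareto front, a tree with that objective vector. *)

From Stdlib Require Import Reals List Arith Bool ClassicalEpsilon ClassicalDescription.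
Import ListNotations.
Open Scope R_scope.

(** Literals: (i, true) is the positive literal x_i, (i, false) is its
    complement. Variables are indexed 0..n-1 (paper: 1..n). *)
Definition lit : Type := (nat * bool)%type.

Inductive ntree : Type :=
| Leaf : lit -> ntree
| Join : ntree -> ntree -> ntree.

(** Syntax trees: None is the empty tree. *)
Definition stree : Type := option ntree.

Fixpoint nsize (t : ntree) : nat :=
  match t with Leaf _ => 1%nat | Join a b => S (nsize a + nsize b) end.

Fixpoint nleaves (t : ntree) : nat :=
  match t with Leaf _ => 1%nat | Join a b => (nleaves a + nleaves b)%nat end.

Fixpoint leaves (t : ntree) : list lit :=
  match t with Leaf l => [l] | Join a b => leaves a ++ leaves b end.

Definition cplx (X : stree) : nat :=
  match X with None => 0%nat | Some t => nsize t end.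

Definition leaflist (X : stree) : list lit :=
  match X with None => [] | Some t => leaves t end.

Definition valid (n : nat) (X : stree) : Prop :=
  forall l, In l (leaflist X) -> (fst l < n)%nat.

Inductive fitness : Type := WORDER | WMAJORITY.

Definition lit_eqb (a b : lit) : bool := Nat.eqb (fst a) (fst b) && Bool.eqb (snd a) (snd b).

(** WORDER list S: scan front to rear, append a literal if neither it nor its
    complement (i.e. no literal on the same variable) is already in S. *)
Definition worder_S (l : list lit) : list lit :=
  fold_left (fun S x => if existsb (fun y => Nat.eqb (fst y) (fst x)) S then S else S ++ [x]) l [].

Definition count_lit (x : lit) (l : list lit) : nat :=
  length (filter (lit_eqb x) l).

Definition expressed (F : fitness) (X : stree) (i : nat) : bool :=
  match F with
  | WORDER => existsb (lit_eqb (i, true)) (worder_S (leaflist X))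
  | WMAJORITY =>
      let cp := count_lit (i, true) (leaflist X) in
      let cn := count_lit (i, false) (leaflist X) in
      Nat.leb 1 cp && Nat.leb cn cp
  end.

Definition sumR (n : nat) (f : nat -> R) : R :=
  fold_right (fun i acc => f i + acc) 0 (seq 0 n).

Definition fit (F : fitness) (n : nat) (w : nat -> R) (X : stree) : R :=
  sumR n (fun i => if expressed F X i then w i else 0).

Definition nexpr (F : fitness) (n : nat) (X : stree) : nat :=
  length (filter (expressed F X) (seq 0 n)).

(** non-redundant: empty, or C(X) = 2k - 1 (written C(X) + 1 = 2k to avoid
    truncated subtraction) *)
Definition nonredundant (F : fitness) (n : nat) (X : stree) : Prop :=
  X = None \/ (cplx X + 1 = 2 * nexpr F n X)%nat.

Definition weights_ok (n : nat) (w : nat -> R) : Prop :=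
  (forall i, (i < n)%nat -> 0 < w i) /\
  (forall i, (S i < n)%nat -> w (S i) <= w i).

Definition wdom (F : fitness) (n : nat) (w : nat -> R) (Y X : stree) : Prop :=
  fit F n w X <= fit F n w Y /\ (cplx Y <= cplx X)%nat.
Definition sdom (F : fitness) (n : nat) (w : nat -> R) (Y X : stree) : Prop :=
  wdom F n w Y X /\ (fit F n w X < fit F n w Y \/ (cplx Y < cplx X)%nat).

Definition decb (P : Prop) : bool :=
  if excluded_middle_informative P then true else false.

Definition wdomb F n w Y X : bool := decb (wdom F n w Y X).
Definition sdomb F n w Y X : bool := decb (sdom F n w Y X).

Definition pareto_optimal (F : fitness) (n : nat) (w : nat -> R) (X : stree) : Prop :=
  valid n X /\ ~ (exists Y, valid n Y /\ sdom F n w Y X).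

Definition objv (F : fitness) (n : nat) (w : nat -> R) (X : stree) : R * nat :=
  (fit F n w X, cplx X).

Definition covers_front (F : fitness) (n : nat) (w : nat -> R) (P : list stree) : Prop :=
  forall X, pareto_optimal F n w X -> exists Z, In Z P /\ objv F n w Z = objv F n w X.

Definition dist (A : Type) : Type := list (R * A).

Definition dbind {A B : Type} (d : dist A) (k : A -> dist B) : dist B :=
  flat_map (fun pa => map (fun qb => (fst pa * fst qb, snd qb)) (k (snd pa))) d.

Definition terms (n : nat) : list lit :=
  flat_map (fun i => [(i, true); (i, false)]) (seq 0 n).

Fixpoint subst_leaf (t : ntree) (k : nat) (u : lit) : ntree :=
  match t with
  | Leaf _ => Leaf u
  | Join a b => if Nat.ltb k (nleaves a) then Join (subst_leaf a k u) b
                else Join a (subst_leaf b (k - nleaves a) u)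
  end.

(** apply f to the subtree rooted at the k-th node in preorder *)
Fixpoint at_node (t : ntree) (k : nat) (f : ntree -> ntree) : ntree :=
  match k, t with
  | O, _ => f t
  | S k', Join a b => if Nat.ltb k' (nsize a) then Join (at_node a k' f) b
                      else Join a (at_node b (k' - nsize a) f)
  | S _, Leaf _ => t
  end.

Fixpoint del_leaf (t : ntree) (k : nat) : option ntree :=
  match t with
  | Leaf _ => None
  | Join a b =>
      if Nat.ltb k (nleaves a) then
        match del_leaf a k with None => Some b | Some a' => Some (Join a' b) end
      else
        match del_leaf b (k - nleaves a) with None => Some a | Some b' => Some (Join a b') end
  end.

Definition third : R := / 3.

Definition mut_subst (n : nat) (X : stree) : dist stree :=
  match X with
  | None => [(1, None)]
  | Some t =>
      flat_map (fun k => map (fun u => (/ INR (nleaves t) * / INR (2 * n), Some (subst_leaf t k u)))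
                             (terms n)) (seq 0 (nleaves t))
  end.

Definition mut_insert (n : nat) (X : stree) : dist stree :=
  match X with
  | None => map (fun u => (/ INR (2 * n), Some (Leaf u))) (terms n)
  | Some t =>
      flat_map (fun k => flat_map (fun u =>
         map (fun b => (/ INR (nsize t) * / INR (2 * n) * / 2,
                        Some (at_node t k (fun v => if b : bool then Join (Leaf u) v else Join v (Leaf u)))))
             [true; false]) (terms n)) (seq 0 (nsize t))
  end.

Definition mut_delete (X : stree) : dist stree :=
  match X with
  | None => [(1, None)]
  | Some t => map (fun k => (/ INR (nleaves t), del_leaf t k)) (seq 0 (nleaves t))
  end.

Definition hvl_prime (n : nat) (X : stree) : dist stree :=
  map (fun pa => (third * fst pa, snd pa)) (mut_subst n X ++ mut_insert n X ++ mut_delete X).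

Definition update (F : fitness) (n : nat) (w : nat -> R) (P : list stree) (Y : stree) : list stree :=
  if existsb (fun Z => sdomb F n w Z Y) P then P
  else Y :: filter (fun Z => negb (wdomb F n w Y Z)) P.

Definition smo_step (F : fitness) (n : nat) (w : nat -> R) (P : list stree) : dist (list stree) :=
  dbind (map (fun X => (/ INR (length P), X)) P)
        (fun X => map (fun qy => (fst qy, update F n w P (snd qy))) (hvl_prime n X)).

(** states carry a flag "front already covered at some time <= t" *)
Definition coveredb F n w (P : list stree) : bool := decb (covers_front F n w P).

Fixpoint state_dist (F : fitness) (n : nat) (w : nat -> R) (X0 : stree) (t : nat)
  : dist (list stree * bool) :=
  match t with
  | O => [(1, ([X0], coveredb F n w [X0]))]
  | S t' => dbind (state_dist F n w X0 t')
              (fun s : list stree * bool => map (fun qP : R * list stree => (fst qP, (snd qP, orb (snd s) (coveredb F n w (snd qP)))))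
                            (smo_step F n w (fst s)))
  end.

(** Pr[T > t], T = number of iterations until the population covers the front *)
Definition prob_not_done (F : fitness) (n : nat) (w : nat -> R) (X0 : stree) (t : nat) : R :=
  fold_right (fun (ps : R * (list stree * bool)) (acc : R) => (if snd (snd ps) then 0 else fst ps) + acc) 0
             (state_dist F n w X0 t).

(** partial sums of E[T] = sum_{t >= 0} Pr[T > t] *)
Definition exp_time_partial (F : fitness) (n : nat) (w : nat -> R) (X0 : stree) (N : nat) : R :=
  sumR N (prob_not_done F n w X0).

(** Starting from a nonredundant tree, every tree
    the population ever contains is clean: only positive literals, each variable
    at most once.  Indeed a mutation adding a negated or repeated literal yields
    a tree that its parent strictly dominates, so it is rejected.  On clean
    trees both fitness functions are the total weight of the occurring
    variables, so a Pareto optimal tree with [k] leaves extends to one with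
    [k+1] leaves by adding a heaviest missing variable.  With [min_size P] the
    smallest tree size in the population and [ncovered P] the number of front
    sizes [0..n] it covers, the potential
      [potential P = 3(n+1) min_size P + 6n(n+1) (n+1 - ncovered P)]
    drops by at least 1 per iteration in expectation: before the empty tree is
    found, deleting a leaf of a smallest tree lowers [min_size]; afterwards,
    inserting the heaviest missing variable into the front tree of a covered
    size [k] whose successor is uncovered covers [k+1].  The additive drift
    theorem bounds [E[T]] by the initial potential, which is at most [30 n^3]. *)

From Pilot Require Import Defs.
From Stdlib Require Import Reals List Arith Bool Lia Lra Permutation Classical ClassicalDescription.
Import ListNotations.
Open Scope R_scope.

Definition lsum {A : Type} (l : list A) (f : A -> R) : R :=
  fold_right (fun x acc => f x + acc) 0 l.
Arguments lsum : simpl never.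

Lemma lsum_nil {A} (f : A -> R) : lsum [] f = 0.
Proof. reflexivity. Qed.

Lemma lsum_cons {A} (a : A) l f : lsum (a :: l) f = f a + lsum l f.
Proof. reflexivity. Qed.

Lemma lsum_app {A} (l1 l2 : list A) f : lsum (l1 ++ l2) f = lsum l1 f + lsum l2 f.
Proof.
  induction l1 as [|a l1 IH]; [unfold lsum; simpl; lra|].
  simpl. rewrite !lsum_cons, IH. lra.
Qed.

Lemma lsum_map {A B} (g : A -> B) l f : lsum (map g l) f = lsum l (fun x => f (g x)).
Proof. induction l as [|a l IH]; simpl; [reflexivity|]. rewrite !lsum_cons, IH; reflexivity. Qed.

Lemma lsum_flat_map {A B} (g : A -> list B) l f :
  lsum (flat_map g l) f = lsum l (fun x => lsum (g x) f).
Proof. induction l as [|a l IH]; simpl; [reflexivity|]. rewrite lsum_app, IH; reflexivity. Qed.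

Lemma lsum_ext {A} (l : list A) f g : (forall x, In x l -> f x = g x) -> lsum l f = lsum l g.
Proof. induction l as [|a l IH]; simpl; intros H; [reflexivity|]. rewrite !lsum_cons, H, IH; auto. Qed.

Lemma lsum_plus {A} (l : list A) f g : lsum l (fun x => f x + g x) = lsum l f + lsum l g.
Proof. induction l as [|a l IH]; [unfold lsum; simpl; lra|]. rewrite !lsum_cons, IH; lra. Qed.

Lemma lsum_scale {A} (l : list A) c f : lsum l (fun x => c * f x) = c * lsum l f.
Proof. induction l as [|a l IH]; [unfold lsum; simpl; lra|]. rewrite !lsum_cons, IH; lra. Qed.

Lemma lsum_const {A} (l : list A) c : lsum l (fun _ => c) = INR (length l) * c.
Proof.
  induction l as [|a l IH]; [unfold lsum; simpl; lra|].
  rewrite lsum_cons, IH, length_cons, S_INR; lra.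
Qed.

Lemma lsum_le {A} (l : list A) f g : (forall x, In x l -> f x <= g x) -> lsum l f <= lsum l g.
Proof.
  induction l as [|a l IH]; intros H; [apply Rle_refl|].
  rewrite !lsum_cons. apply Rplus_le_compat; [apply H; left; auto|].
  apply IH; intros x Hx; apply H; right; auto.
Qed.

Lemma lsum_ge0 {A} (l : list A) f : (forall x, In x l -> 0 <= f x) -> 0 <= lsum l f.
Proof.
  intros H. replace 0 with (lsum l (fun _ => 0)) by (rewrite lsum_const; lra).
  apply lsum_le; auto.
Qed.

Lemma lsum_ge_term {A} (l : list A) f x0 :
  In x0 l -> (forall x, In x l -> 0 <= f x) -> f x0 <= lsum l f.
Proof.
  induction l as [|a l IH]; intros Hx0 H; [contradiction|]. rewrite lsum_cons.
  assert (0 <= f a) by (apply H; left; auto).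
  assert (0 <= lsum l f) by (apply lsum_ge0; intros; apply H; right; auto).
  destruct Hx0 as [<-|Hx0]; [lra|].
  assert (f x0 <= lsum l f) by (apply IH; auto; intros; apply H; right; auto). lra.
Qed.

Lemma lsum_lt {A} (l : list A) f g x0 : (forall x, In x l -> f x <= g x) ->
  In x0 l -> f x0 < g x0 -> lsum l f < lsum l g.
Proof.
  intros Hle Hx0 Hlt.
  assert (H : lsum l (fun x => g x - f x) > 0).
  { apply Rlt_le_trans with (g x0 - f x0); [lra|].
    apply (lsum_ge_term l (fun x => g x - f x)); auto. intros x Hx; specialize (Hle x Hx); lra. }
  rewrite (lsum_ext l _ (fun x => g x + (-1) * f x)) in H by (intros; ring).
  rewrite lsum_plus, lsum_scale in H. lra.
Qed.

Lemma lsum_split_point (l : list nat) f u : NoDup l -> In u l ->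
  lsum l f = f u + lsum l (fun i => if Nat.eqb i u then 0 else f i).
Proof.
  induction l as [|a l IH]; intros Hd Hu; [contradiction|]. inversion Hd as [|? ? Ha Hd']; subst.
  rewrite !lsum_cons. destruct Hu as [<-|Hu].
  - rewrite Nat.eqb_refl.
    assert (E : lsum l (fun i => if Nat.eqb i a then 0 else f i) = lsum l f).
    { apply lsum_ext. intros i Hi. destruct (Nat.eqb_spec i a); congruence. }
    rewrite E. lra.
  - destruct (Nat.eqb_spec a u); [subst; contradiction|]. rewrite (IH Hd' Hu). lra.
Qed.

Lemma sumR_lsum n f : sumR n f = lsum (seq 0 n) f.
Proof. reflexivity. Qed.

Lemma sumR_S n f : sumR (S n) f = sumR n f + f n.
Proof. rewrite !sumR_lsum, seq_S, lsum_app, lsum_cons, lsum_nil. simpl. lra. Qed.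

Lemma NoDup_map_filter {A B} (g : A -> B) f (l : list A) :
  NoDup (map g l) -> NoDup (map g (filter f l)).
Proof.
  induction l as [|a l IH]; simpl; intros H; auto. inversion H as [|? ? Ha Hl]; subst.
  destruct (f a); simpl; auto. constructor; auto. intros Hin. apply Ha.
  apply in_map_iff in Hin. destruct Hin as (x & <- & Hx). apply filter_In in Hx. apply in_map; tauto.
Qed.

Definition Ex {A : Type} (d : Defs.dist A) (f : A -> R) : R :=
  lsum d (fun pa => fst pa * f (snd pa)).

Definition nonnegd {A : Type} (d : Defs.dist A) : Prop := forall pa, In pa d -> 0 <= fst pa.

Lemma Ex_app {A} (d1 d2 : Defs.dist A) f : Ex (d1 ++ d2) f = Ex d1 f + Ex d2 f.
Proof. apply lsum_app. Qed.

Lemma Ex_map_scale {A} c (d : Defs.dist A) f :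
  Ex (map (fun qb => (c * fst qb, snd qb)) d) f = c * Ex d f.
Proof. unfold Ex. rewrite lsum_map, <- lsum_scale. apply lsum_ext; intros; simpl; ring. Qed.

Lemma Ex_map {A B} (g : A -> B) (d : Defs.dist A) f :
  Ex (map (fun pa => (fst pa, g (snd pa))) d) f = Ex d (fun a => f (g a)).
Proof. unfold Ex. rewrite lsum_map. reflexivity. Qed.

Lemma Ex_uniform {A B} c (g : A -> B) l f :
  Ex (map (fun x => (c, g x)) l) f = c * lsum l (fun x => f (g x)).
Proof. unfold Ex. rewrite lsum_map. simpl. rewrite lsum_scale. reflexivity. Qed.

Lemma Ex_flat_map {A B} (g : A -> Defs.dist B) l f :
  Ex (flat_map g l) f = lsum l (fun x => Ex (g x) f).
Proof. apply lsum_flat_map. Qed.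

Lemma Ex_dbind {A B} (d : Defs.dist A) (k : A -> Defs.dist B) f :
  Ex (dbind d k) f = Ex d (fun a => Ex (k a) f).
Proof. unfold dbind. rewrite Ex_flat_map. apply lsum_ext. intros pa _. apply Ex_map_scale. Qed.

Lemma Ex_zero {A} (d : Defs.dist A) : Ex d (fun _ => 0) = 0.
Proof. unfold Ex. rewrite (lsum_ext _ _ (fun _ => 0)) by (intros; ring). rewrite lsum_const. ring. Qed.

Lemma Ex_le {A} (d : Defs.dist A) f g : nonnegd d ->
  (forall pa, In pa d -> f (snd pa) <= g (snd pa)) -> Ex d f <= Ex d g.
Proof.
  intros Hd H. apply lsum_le. intros pa Hpa.
  apply Rmult_le_compat_l; [apply Hd|apply H]; auto.
Qed.

Lemma Ex_ge0 {A} (d : Defs.dist A) f : nonnegd d ->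
  (forall pa, In pa d -> 0 <= f (snd pa)) -> 0 <= Ex d f.
Proof. intros Hd H. apply lsum_ge0. intros pa Hpa. apply Rmult_le_pos; auto. Qed.

Lemma Ex_affine {A} (d : Defs.dist A) f a b :
  Ex d (fun x => a * f x + b) = a * Ex d f + b * Ex d (fun _ => 1).
Proof.
  unfold Ex. rewrite <- !lsum_scale, <- lsum_plus. apply lsum_ext; intros; ring.
Qed.

Lemma expected_decrease {A} (d : Defs.dist A) (g ind : A -> R) G c p :
  nonnegd d -> Ex d (fun _ => 1) = 1 -> 0 <= c -> 1 <= c * p ->
  (forall pa, In pa d -> g (snd pa) <= G - c * ind (snd pa)) -> p <= Ex d ind ->
  Ex d g <= G - 1.
Proof.
  intros Hd Hm Hc Hcp H Hp.
  assert (Hle : Ex d g <= Ex d (fun x => (- c) * ind x + G))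
    by (apply Ex_le; auto; intros pa Hpa; specialize (H pa Hpa); lra).
  rewrite Ex_affine, Hm in Hle. nra.
Qed.

Lemma leaves_length t : length (leaves t) = nleaves t.
Proof. induction t; simpl; auto. rewrite length_app; lia. Qed.

Lemma nsize_nleaves t : (nsize t + 1 = 2 * nleaves t)%nat.
Proof. induction t; simpl; lia. Qed.

Lemma nleaves_pos t : (1 <= nleaves t)%nat.
Proof. induction t; simpl; lia. Qed.

Lemma nsize_pos t : (1 <= nsize t)%nat.
Proof. pose proof (nsize_nleaves t); pose proof (nleaves_pos t); lia. Qed.

(** [nl X] is the number of leaves of [X]; since [C(X) = 2 nl(X) - 1], comparing
    complexities is the same as comparing leaf counts. *)
Definition nl (X : stree) : nat := length (leaflist X).

Lemma cplx_nl X : cplx X = (2 * nl X - 1)%nat.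
Proof.
  destruct X as [t|]; unfold nl; simpl; auto.
  rewrite leaves_length. pose proof (nsize_nleaves t). lia.
Qed.

Lemma cplx_le X Y : (cplx X <= cplx Y)%nat <-> (nl X <= nl Y)%nat.
Proof. rewrite !cplx_nl. destruct (Nat.eq_dec (nl X) 0) as [->|]; split; lia. Qed.

Lemma cplx_lt X Y : (cplx X < cplx Y)%nat <-> (nl X < nl Y)%nat.
Proof. rewrite !cplx_nl. destruct (Nat.eq_dec (nl X) 0) as [->|]; split; lia. Qed.

Lemma cplx_eq X Y : cplx X = cplx Y <-> nl X = nl Y.
Proof. rewrite !cplx_nl. destruct (Nat.eq_dec (nl X) 0), (Nat.eq_dec (nl Y) 0); split; lia. Qed.

Lemma nl_zero X : nl X = 0%nat -> X = None.
Proof.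
  destruct X as [t|]; unfold nl; simpl; auto.
  rewrite leaves_length. pose proof (nleaves_pos t). lia.
Qed.

Lemma subst_leaf_leaves t k u : (k < nleaves t)%nat ->
  exists a x c, leaves t = a ++ x :: c /\ leaves (subst_leaf t k u) = a ++ u :: c.
Proof.
  revert k; induction t as [l|t1 IH1 t2 IH2]; intros k Hk; simpl in *.
  - exists [], l, []; auto.
  - destruct (Nat.ltb_spec k (nleaves t1)).
    + destruct (IH1 k H) as (a & x & c & H1 & H2). exists a, x, (c ++ leaves t2).
      simpl. rewrite H1, H2, <- !app_assoc. auto.
    + destruct (IH2 (k - nleaves t1)%nat) as (a & x & c & H1 & H2); [lia|].
      exists (leaves t1 ++ a), x, c. simpl. rewrite H1, H2, <- !app_assoc. auto.
Qed.

Definition insf (u : lit) (b : bool) (v : ntree) : ntree :=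
  if b then Join (Leaf u) v else Join v (Leaf u).

Lemma at_node_ins t k u b : (k < nsize t)%nat ->
  exists a c, leaves t = a ++ c /\ leaves (at_node t k (insf u b)) = a ++ u :: c.
Proof.
  revert k; induction t as [l|t1 IH1 t2 IH2]; intros k Hk; destruct k; simpl in *.
  - destruct b; simpl; [exists [], [l]|exists [l], []]; auto.
  - lia.
  - destruct b; simpl; [exists [], (leaves t1 ++ leaves t2)|exists (leaves t1 ++ leaves t2), []];
      rewrite ?app_nil_r; auto.
  - destruct (Nat.ltb_spec k (nsize t1)).
    + destruct (IH1 k H) as (a & c & H1 & H2). exists a, (c ++ leaves t2).
      simpl. rewrite H1, H2, <- !app_assoc. auto.
    + destruct (IH2 (k - nsize t1)%nat) as (a & c & H1 & H2); [lia|].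
      exists (leaves t1 ++ a), c. simpl. rewrite H1, H2, <- !app_assoc. auto.
Qed.

Lemma del_leaf_leaves t k : (k < nleaves t)%nat ->
  exists a x c, leaves t = a ++ x :: c /\ leaflist (del_leaf t k) = a ++ c.
Proof.
  revert k; induction t as [l|t1 IH1 t2 IH2]; intros k Hk; simpl in *.
  - exists [], l, []; auto.
  - destruct (Nat.ltb_spec k (nleaves t1)).
    + destruct (IH1 k H) as (a & x & c & H1 & H2).
      destruct (del_leaf t1 k) eqn:E; simpl in *.
      * exists a, x, (c ++ leaves t2). rewrite H1, H2, <- !app_assoc. auto.
      * destruct a, c; try discriminate. exists [], x, (leaves t2). rewrite H1. auto.
    + destruct (IH2 (k - nleaves t1)%nat) as (a & x & c & H1 & H2); [lia|].
      destruct (del_leaf t2 (k - nleaves t1)) eqn:E; simpl in *.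
      * exists (leaves t1 ++ a), x, c. rewrite H1, H2, <- !app_assoc. auto.
      * destruct a, c; try discriminate. exists (leaves t1), x, []. rewrite H1, app_nil_r. auto.
Qed.

Lemma in_terms u n : In u (terms n) -> (fst u < n)%nat.
Proof.
  unfold terms. intros H. apply in_flat_map in H. destruct H as (i & Hi & H).
  apply in_seq in Hi. destruct H as [<-|[<-|[]]]; simpl; lia.
Qed.

Lemma terms_in i b n : (i < n)%nat -> In (i, b) (terms n).
Proof.
  intros H. unfold terms. apply in_flat_map. exists i.
  split; [apply in_seq; lia|destruct b; simpl; auto].
Qed.

Lemma length_terms n : length (terms n) = (2 * n)%nat.
Proof.
  unfold terms. rewrite <- (length_seq n 0) at 2.
  generalize (seq 0 n) as l. induction l; simpl; lia.
Qed.

Definition leaf_step (n : nat) (X Y : stree) : Prop :=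
  (exists a x c u, leaflist X = a ++ x :: c /\ leaflist Y = a ++ u :: c /\ (fst u < n)%nat) \/
  (exists a c u, leaflist X = a ++ c /\ leaflist Y = a ++ u :: c /\ (fst u < n)%nat) \/
  (exists a x c, leaflist X = a ++ x :: c /\ leaflist Y = a ++ c) \/
  Y = X.

Lemma hvl_leaf_step n X qy : In qy (hvl_prime n X) -> leaf_step n X (snd qy).
Proof.
  unfold hvl_prime, leaf_step. intros H. apply in_map_iff in H. destruct H as (pa & <- & H). simpl.
  rewrite !in_app_iff in H. destruct X as [t|]; simpl in H.
  - destruct H as [H|[H|H]].
    + apply in_flat_map in H. destruct H as (k & Hk & H). apply in_map_iff in H.
      destruct H as (u & <- & Hu). apply in_seq in Hk.
      destruct (subst_leaf_leaves t k u) as (a & x & c & H1 & H2); [lia|].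
      left. exists a, x, c, u. simpl. auto using in_terms.
    + apply in_flat_map in H. destruct H as (k & Hk & H). apply in_flat_map in H.
      destruct H as (u & Hu & H). apply in_seq in Hk.
      right; left. destruct H as [<-|[<-|[]]]; simpl;
        [destruct (at_node_ins t k u true) as (a & c & H1 & H2)
        |destruct (at_node_ins t k u false) as (a & c & H1 & H2)]; try lia;
        exists a, c, u; auto using in_terms.
    + apply in_map_iff in H. destruct H as (k & <- & Hk). apply in_seq in Hk.
      destruct (del_leaf_leaves t k) as (a & x & c & H1 & H2); [lia|].
      right; right; left. exists a, x, c. auto.
  - destruct H as [[<-|[]]|[H|[<-|[]]]]; auto.
    apply in_map_iff in H. destruct H as (u & <- & Hu).
    right; left. exists [], [], u. auto using in_terms.
Qed.

(** * Fitness of clean trees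

    On a clean tree both WORDER and
    WMAJORITY express exactly the variables occurring in it. *)

Definition allpos (l : list lit) : Prop := forall x, In x l -> snd x = true.

Definition clean (n : nat) (l : list lit) : Prop :=
  (forall x, In x l -> (fst x < n)%nat) /\ allpos l /\ NoDup (map fst l).

Definition clean_tree (n : nat) (X : stree) : Prop := clean n (leaflist X).

Lemma lit_eqb_true a b : lit_eqb a b = true <-> a = b.
Proof.
  unfold lit_eqb. destruct a as [i s], b as [j t]; simpl.
  rewrite andb_true_iff, Nat.eqb_eq, eqb_true_iff. split; [intros [-> ->]|intros [= -> ->]]; auto.
Qed.

Definition wstep (S : list lit) (x : lit) : list lit :=
  if existsb (fun y => Nat.eqb (fst y) (fst x)) S then S else S ++ [x].

Lemma wscan_sub l S0 y : In y (fold_left wstep l S0) -> In y S0 \/ In y l.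
Proof.
  revert S0; induction l as [|x l IH]; simpl; intros S0 H; auto.
  destruct (IH _ H) as [H1|H1]; auto. unfold wstep in H1.
  destruct existsb; auto. apply in_app_or in H1. destruct H1 as [H1|[H1|[]]]; auto.
Qed.

Lemma wscan_mono l S0 y : In y S0 -> In y (fold_left wstep l S0).
Proof.
  revert S0; induction l as [|x l IH]; simpl; intros S0 H; auto.
  apply IH. unfold wstep. destruct existsb; auto. apply in_or_app; auto.
Qed.

Lemma wscan_cover l S0 x : In x l -> exists y, In y (fold_left wstep l S0) /\ fst y = fst x.
Proof.
  revert S0; induction l as [|z l IH]; simpl; intros S0 H; [contradiction|].
  destruct H as [<-|H]; auto. unfold wstep at 2. destruct existsb eqn:E.
  - apply existsb_exists in E. destruct E as (y & Hy & He). apply Nat.eqb_eq in He.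
    exists y. split; auto. apply wscan_mono; auto.
  - exists z. split; auto. apply wscan_mono. apply in_or_app. right; left; auto.
Qed.

Lemma count_pos x l : (1 <= count_lit x l)%nat <-> In x l.
Proof.
  unfold count_lit. induction l as [|y l IH]; simpl; [split; [lia|tauto]|].
  destruct (lit_eqb x y) eqn:E; simpl.
  - apply lit_eqb_true in E. subst. split; auto. lia.
  - rewrite IH. split; auto. intros [->|H]; auto.
    assert (lit_eqb x x = true) by (apply lit_eqb_true; auto). congruence.
Qed.

Lemma expressed_pos_leaf F X i : expressed F X i = true -> In (i, true) (leaflist X).
Proof.
  destruct F; unfold expressed; intros H.
  - apply existsb_exists in H. destruct H as (y & Hy & He). apply lit_eqb_true in He. subst.
    apply wscan_sub in Hy. destruct Hy as [[]|]; auto.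
  - apply andb_true_iff in H. destruct H as [H _]. apply Nat.leb_le in H. apply count_pos; auto.
Qed.

Lemma map_fst_in l i : In i (map fst l) -> allpos l -> In (i, true) l.
Proof.
  intros H Hp. apply in_map_iff in H. destruct H as ([j s] & <- & H).
  pose proof (Hp _ H). simpl in *. subst. auto.
Qed.

Lemma expressed_iff F X i : allpos (leaflist X) ->
  expressed F X i = true <-> In (i, true) (leaflist X).
Proof.
  intros Hp. split; [apply expressed_pos_leaf|intros Hi]. destruct F; unfold expressed.
  - apply existsb_exists. destruct (wscan_cover _ [] _ Hi) as (y & Hy & He).
    exists y. split; auto. apply lit_eqb_true. destruct y as [j s]. simpl in He. subst.
    destruct (wscan_sub _ _ _ Hy) as [[]|Hy']. apply Hp in Hy'. simpl in Hy'. subst; auto.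
  - apply andb_true_iff. split; apply Nat.leb_le; [apply count_pos; auto|].
    destruct (count_lit (i, false) (leaflist X)) eqn:E; [lia|].
    assert (Hin : In (i, false) (leaflist X)) by (apply count_pos; lia).
    apply Hp in Hin. discriminate.
Qed.

Lemma fit_le F n w X Y : weights_ok n w -> allpos (leaflist X) ->
  (forall i, In (i, true) (leaflist Y) -> In (i, true) (leaflist X)) ->
  fit F n w Y <= fit F n w X.
Proof.
  intros [Hw _] Hp H. unfold fit. rewrite !sumR_lsum. apply lsum_le. intros i Hi.
  apply in_seq in Hi. pose proof (Hw i (proj2 Hi)).
  destruct (expressed F Y i) eqn:E; [|destruct (expressed F X i); lra].
  apply expressed_pos_leaf, H, (expressed_iff F X i Hp) in E. rewrite E. lra.
Qed.

Lemma fit_lt F n w X Y i0 : weights_ok n w -> allpos (leaflist X) ->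
  (forall i, In (i, true) (leaflist Y) -> In (i, true) (leaflist X)) ->
  (i0 < n)%nat -> In (i0, true) (leaflist X) -> ~ In (i0, true) (leaflist Y) ->
  fit F n w Y < fit F n w X.
Proof.
  intros Hw Hp H Hi0 HX HY. unfold fit. rewrite !sumR_lsum. apply lsum_lt with i0.
  - intros i Hi. apply in_seq in Hi. pose proof (proj1 Hw i (proj2 Hi)).
    destruct (expressed F Y i) eqn:E; [|destruct (expressed F X i); lra].
    apply expressed_pos_leaf, H, (expressed_iff F X i Hp) in E. rewrite E. lra.
  - apply in_seq; lia.
  - apply (expressed_iff F X i0 Hp) in HX. rewrite HX.
    destruct (expressed F Y i0) eqn:E; [apply expressed_pos_leaf in E; contradiction|].
    apply (proj1 Hw); auto.
Qed.

(** Nonredundant trees are clean: [2k - 1] nodes means exactly [k] leaves, each of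
    which must be a distinct expressed positive variable. *)
Lemma nonredundant_clean F n X : valid n X -> nonredundant F n X -> clean_tree n X.
Proof.
  intros Hv [->|H].
  - split; [|split]; [intros l []|intros l []|constructor].
  - rewrite cplx_nl in H. unfold nexpr in H.
    set (E := filter (expressed F X) (seq 0 n)) in *.
    assert (HEd : NoDup E) by (apply NoDup_filter, seq_NoDup).
    assert (HEi : incl E (map fst (filter snd (leaflist X)))).
    { intros i Hi. apply filter_In in Hi. destruct Hi as [_ Hi]. apply expressed_pos_leaf in Hi.
      apply in_map_iff. exists (i, true). split; auto. apply filter_In; auto. }
    pose proof (NoDup_incl_length HEd HEi) as L1. rewrite length_map in L1.
    pose proof (filter_length_le snd (leaflist X)) as L2.
    change (length (leaflist X)) with (nl X) in L2.
    assert (Hnl : length E = nl X) by lia.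
    assert (Hall : length (filter snd (leaflist X)) = length (leaflist X))
      by (change (length (leaflist X)) with (nl X); lia).
    assert (Hp : allpos (leaflist X)).
    { apply filter_length_forallb in Hall. rewrite forallb_forall in Hall. auto. }
    split; [exact Hv|split; auto].
    apply (NoDup_incl_NoDup HEd).
    { rewrite length_map. change (length (leaflist X)) with (nl X). lia. }
    intros i Hi. apply HEi in Hi. apply in_map_iff in Hi. destruct Hi as (l & <- & Hl).
    apply filter_In in Hl. apply in_map; tauto.
Qed.

(** * Offspring of clean trees

    Mutating a clean tree either yields a clean tree or a tree that its parent
    strictly dominates (a negated or repeated literal never helps). *)

Lemma clean_insert n a c u : clean n (a ++ c) -> (fst u < n)%nat -> snd u = true ->
  ~ In (fst u) (map fst (a ++ c)) -> clean n (a ++ u :: c).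
Proof.
  intros (Hv & Hp & Hd) Hu Eu Hnin. split; [|split].
  - intros l Hl. apply in_elt_inv in Hl. destruct Hl as [->|Hl]; auto.
  - intros l Hl. apply in_elt_inv in Hl. destruct Hl as [->|Hl]; auto.
  - rewrite map_app in *. simpl. apply NoDup_app_remove_l with (l := []). simpl.
    apply Permutation_NoDup with (fst u :: map fst a ++ map fst c);
      [apply Permutation_middle|constructor; auto].
Qed.

Lemma clean_delete n a x c : clean n (a ++ x :: c) -> clean n (a ++ c).
Proof.
  intros (Hv & Hp & Hd).
  assert (Hsub : forall l, In l (a ++ c) -> In l (a ++ x :: c)).
  { intros l. rewrite !in_app_iff. simpl. tauto. }
  split; [|split]; [intros l Hl; apply Hv, Hsub; auto|intros l Hl; apply Hp, Hsub; auto|].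
  rewrite map_app in *. simpl in Hd. apply NoDup_remove_1 in Hd. auto.
Qed.

Lemma stale_insert a c u : allpos (a ++ c) ->
  ~ (snd u = true /\ ~ In (fst u) (map fst (a ++ c))) ->
  forall i, In (i, true) (a ++ u :: c) -> In (i, true) (a ++ c).
Proof.
  intros Hp Hstale i Hi. apply in_elt_inv in Hi. destruct Hi as [<-|Hi]; auto.
  apply map_fst_in; auto. apply NNPP. intros Hnin. apply Hstale. auto.
Qed.

Lemma valid_leaf_step n X Y : valid n X -> leaf_step n X Y -> valid n Y.
Proof.
  unfold valid. intros Hv [(a & x & c & u & HX & HY & Hu)|[(a & c & u & HX & HY & Hu)|
    [(a & x & c & HX & HY)| ->]]] l Hl; auto; rewrite HY in Hl; rewrite HX in Hv.
  - apply in_elt_inv in Hl. destruct Hl as [->|Hl]; auto.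
    apply Hv. rewrite in_app_iff in *. simpl. tauto.
  - apply in_elt_inv in Hl. destruct Hl as [->|Hl]; auto.
  - apply Hv. rewrite in_app_iff in *. simpl. tauto.
Qed.

(** A substituted literal that is negated or repeated loses the replaced
    variable without gaining one, so the parent is strictly fitter. *)
Lemma subst_clean_or_dominated F n w X Y a x c u : weights_ok n w ->
  clean n (leaflist X) -> leaflist X = a ++ x :: c -> leaflist Y = a ++ u :: c -> (fst u < n)%nat ->
  clean n (leaflist Y) \/ sdom F n w X Y.
Proof.
  intros Hw HX HlX HlY Hu. rewrite HlX in HX. pose proof (clean_delete _ _ _ _ HX) as Hac.
  destruct (classic (snd u = true /\ ~ In (fst u) (map fst (a ++ c)))) as [[Eu Hnin]|Hstale].
  { left. rewrite HlY. apply clean_insert; auto. }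
  right. destruct HX as (HvX & HpX & HdX). rewrite <- HlX in HpX.
  assert (Hstale' := stale_insert a c u (proj1 (proj2 Hac)) Hstale).
  assert (Hsub : forall i, In (i, true) (leaflist Y) -> In (i, true) (leaflist X)).
  { intros i Hi. rewrite HlY in Hi. apply Hstale' in Hi. rewrite HlX, in_app_iff in *. simpl. tauto. }
  assert (Hx : x = (fst x, true)).
  { destruct x as [j s]. f_equal. apply (HpX (j, s)). rewrite HlX. apply in_elt. }
  assert (Hcplx : cplx Y = cplx X) by (apply cplx_eq; unfold nl; rewrite HlX, HlY, !length_app; auto).
  split; [split; [apply fit_le; auto|lia]|left].
  apply fit_lt with (fst x); auto.
  - apply HvX, in_elt.
  - rewrite HlX, <- Hx. apply in_elt.
  - intros Hin. rewrite HlY in Hin. apply Hstale' in Hin.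
    rewrite map_app in HdX. simpl in HdX. apply NoDup_remove_2 in HdX. apply HdX.
    rewrite <- map_app. apply (in_map fst) in Hin. auto.
Qed.

(** An inserted literal that is negated or repeated adds no variable but
    increases the complexity, so the parent is strictly better. *)
Lemma insert_clean_or_dominated F n w X Y a c u : weights_ok n w ->
  clean n (leaflist X) -> leaflist X = a ++ c -> leaflist Y = a ++ u :: c -> (fst u < n)%nat ->
  clean n (leaflist Y) \/ sdom F n w X Y.
Proof.
  intros Hw HX HlX HlY Hu. rewrite HlX in HX.
  destruct (classic (snd u = true /\ ~ In (fst u) (map fst (a ++ c)))) as [[Eu Hnin]|Hstale].
  { left. rewrite HlY. apply clean_insert; auto. }
  right. destruct HX as (HvX & HpX & HdX).
  assert (Hcplx : (cplx X < cplx Y)%nat)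
    by (apply cplx_lt; unfold nl; rewrite HlX, HlY, !length_app; simpl; lia).
  split; [split|right; auto]; [|lia].
  apply fit_le; auto; rewrite HlX; auto. intros i Hi. rewrite HlY in Hi.
  apply (stale_insert a c u); auto.
Qed.

Lemma offspring_clean_or_dominated F n w X Y : weights_ok n w -> clean_tree n X -> leaf_step n X Y ->
  clean_tree n Y \/ sdom F n w X Y.
Proof.
  unfold clean_tree. intros Hw HX [(a & x & c & u & HlX & HlY & Hu)|[(a & c & u & HlX & HlY & Hu)|
    [(a & x & c & HlX & HlY)| ->]]]; auto.
  - apply (subst_clean_or_dominated F n w X Y a x c u); auto.
  - apply (insert_clean_or_dominated F n w X Y a c u); auto.
  - left. rewrite HlY. rewrite HlX in HX. apply (clean_delete _ _ _ _ HX).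
Qed.

Lemma decb_true (P : Prop) : decb P = true <-> P.
Proof. unfold decb. destruct excluded_middle_informative; split; auto; discriminate. Qed.

Lemma decb_false (P : Prop) : decb P = false <-> ~ P.
Proof. unfold decb. destruct excluded_middle_informative; split; auto; try discriminate; tauto. Qed.

Section Population.
Variable F : fitness.
Variable n : nat.
Variable w : nat -> R.
Hypothesis Hw : weights_ok n w.

Definition accepted (P : list stree) (Y : stree) : Prop :=
  ~ exists Z, In Z P /\ sdom F n w Z Y.

Lemma update_cases P Y :
  (update F n w P Y = P /\ ~ accepted P Y) \/
  (accepted P Y /\ update F n w P Y = Y :: filter (fun Z => negb (wdomb F n w Y Z)) P).
Proof.
  assert (E : existsb (fun Z => sdomb F n w Z Y) P = true <-> ~ accepted P Y).
  { unfold accepted, sdomb. rewrite existsb_exists. split.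
    - intros (Z & HZ & Hs) Hno. apply Hno. exists Z. split; auto. apply decb_true; auto.
    - intros H. apply NNPP in H. destruct H as (Z & HZ & Hs).
      exists Z. split; auto. apply decb_true; auto. }
  unfold update. destruct existsb eqn:Eb.
  - left. split; auto. apply E; auto.
  - right. split; auto. apply NNPP. intros Hn. apply E in Hn. congruence.
Qed.

Lemma update_keep P Y Z : In Z P ->
  In Z (update F n w P Y) \/ (In Y (update F n w P Y) /\ wdom F n w Y Z).
Proof.
  intros HZ. destruct (update_cases P Y) as [[-> _]|[_ ->]]; [left; auto|].
  destruct (wdomb F n w Y Z) eqn:E.
  - right. split; [left; auto|]. apply decb_true; auto.
  - left. right. apply filter_In. rewrite E; auto.
Qed.

Lemma update_accepted P Y : accepted P Y -> In Y (update F n w P Y).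
Proof. intros H. destruct (update_cases P Y) as [[_ H1]|[_ ->]]; [contradiction|left; auto]. Qed.

Definition pop_inv (P : list stree) : Prop :=
  P <> [] /\ (forall Z, In Z P -> clean_tree n Z) /\ NoDup (map nl P).

(** The invariant is preserved: an accepted offspring is clean (otherwise its
    parent would dominate it), and it evicts any member of its own size. *)
Lemma pop_inv_update P X Y : pop_inv P -> In X P -> leaf_step n X Y ->
  pop_inv (update F n w P Y).
Proof.
  intros (Hne & Hg & Hd) HX Hc. destruct (update_cases P Y) as [[-> _]|[Ha ->]];
    [split; auto|split; [discriminate|split]].
  - intros Z [<-|HZ].
    + destruct (offspring_clean_or_dominated F n w X Y Hw (Hg X HX) Hc); auto.
      exfalso; apply Ha; exists X; auto.
    + apply filter_In in HZ. apply Hg; tauto.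
  - simpl. constructor.
    + intros Hin. apply in_map_iff in Hin. destruct Hin as (Z & Hn & HZ).
      apply filter_In in HZ. destruct HZ as [HZ Hwd].
      apply negb_true_iff, (proj1 (decb_false _)) in Hwd. apply Ha. exists Z. split; auto.
      assert (cplx Z = cplx Y) by (apply cplx_eq; auto).
      assert (~ fit F n w Z <= fit F n w Y) by (intros Hle; apply Hwd; split; [auto|lia]).
      split; [split|left]; [lra|lia|lra].
    + apply NoDup_map_filter; auto.
Qed.

Lemma clean_tree_nl Z : clean_tree n Z -> (nl Z <= n)%nat.
Proof.
  intros (Hv & _ & Hd). unfold nl. rewrite <- (length_map (@fst nat bool)), <- (length_seq n 0).
  apply NoDup_incl_length; auto. intros i Hi. apply in_map_iff in Hi.
  destruct Hi as (l & <- & Hl). apply in_seq. specialize (Hv l Hl). lia.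
Qed.

Lemma pop_inv_length P : pop_inv P -> (length P <= S n)%nat.
Proof.
  intros (_ & Hg & Hd). rewrite <- (length_map nl), <- (length_seq (S n) 0).
  apply NoDup_incl_length; auto. intros i Hi. apply in_map_iff in Hi.
  destruct Hi as (Z & <- & HZ). apply in_seq. pose proof (clean_tree_nl Z (Hg Z HZ)). lia.
Qed.

(** ** The Pareto front *)

Definition opt (j : nat) (Z : stree) : Prop := pareto_optimal F n w Z /\ nl Z = j.
Definition covered (P : list stree) (j : nat) : Prop := exists Z, In Z P /\ opt j Z.

(** A covered point of the front is never lost: only an equally good tree can
    replace its representative. *)
Lemma covered_update P Y j : valid n Y -> covered P j -> covered (update F n w P Y) j.
Proof.
  intros HvY (Z & HZ & [[HvZ HnZ] Hj]). destruct (update_keep P Y Z HZ) as [H|[H [H1 H2]]].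
  - exists Z. repeat split; auto.
  - assert (Hns : ~ sdom F n w Y Z) by (intros Hs; apply HnZ; exists Y; auto).
    assert (Hf : fit F n w Y = fit F n w Z).
    { destruct (Rle_lt_or_eq_dec _ _ H1) as [Hlt|]; auto. exfalso. apply Hns. split; [split|]; auto. }
    assert (Hc : cplx Y = cplx Z).
    { destruct (Nat.eq_dec (cplx Y) (cplx Z)); auto. exfalso. apply Hns. split; [split|right]; auto; lia. }
    exists Y. split; auto. split; [split; auto|].
    + intros (W & HW & Hs). apply HnZ. exists W. split; auto.
      unfold sdom, wdom in *. rewrite <- Hf, <- Hc. auto.
    + rewrite <- Hj. apply cplx_eq; auto.
Qed.

Fixpoint comb (x : lit) (l : list lit) : ntree :=
  match l with [] => Leaf x | y :: l' => Join (Leaf x) (comb y l') end.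

Definition tree_of (l : list lit) : stree :=
  match l with [] => None | x :: l' => Some (comb x l') end.

Lemma tree_of_leaves l : leaflist (tree_of l) = l.
Proof.
  destruct l as [|x l]; simpl; auto. revert x; induction l as [|y l IH]; intros x; simpl; auto.
  rewrite IH. auto.
Qed.

Definition Se (e : nat -> bool) : R := sumR n (fun i => if e i then w i else 0).
Definition card (e : nat -> bool) : nat := length (filter e (seq 0 n)).
Definition canon (e : nat -> bool) : stree :=
  tree_of (map (fun i => (i, true)) (filter e (seq 0 n))).

Lemma canon_valid e : valid n (canon e).
Proof.
  intros l Hl. unfold canon in Hl. rewrite tree_of_leaves, in_map_iff in Hl.
  destruct Hl as (i & <- & Hi). apply filter_In in Hi. destruct Hi as [Hi _]. apply in_seq in Hi. simpl; lia.
Qed.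

Lemma canon_nl e : nl (canon e) = card e.
Proof. unfold nl, canon, card. rewrite tree_of_leaves, length_map. auto. Qed.

Lemma canon_fit e : fit F n w (canon e) = Se e.
Proof.
  unfold fit, Se. rewrite !sumR_lsum. apply lsum_ext. intros i Hi.
  assert (Hp : allpos (leaflist (canon e))).
  { intros l Hl. unfold canon in Hl. rewrite tree_of_leaves, in_map_iff in Hl.
    destruct Hl as (j & <- & _). auto. }
  assert (E : expressed F (canon e) i = e i).
  { apply eq_true_iff_eq. rewrite expressed_iff; auto. unfold canon. rewrite tree_of_leaves, in_map_iff.
    split; [intros (j & [= ->] & Hj); apply filter_In in Hj; tauto|].
    intros He. exists i. split; auto. apply filter_In; auto. }
  rewrite E. auto.
Qed.

Lemma card_le_n e : (card e <= n)%nat.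
Proof. unfold card. rewrite <- (length_seq n 0) at 2. apply filter_length_le. Qed.

Lemma card_expressed W : (card (expressed F W) <= nl W)%nat.
Proof.
  unfold card, nl. rewrite <- (length_map (@fst nat bool)).
  apply NoDup_incl_length; [apply NoDup_filter, seq_NoDup|].
  intros i Hi. apply filter_In in Hi. destruct Hi as [_ Hi]. apply expressed_pos_leaf in Hi.
  apply (in_map fst) in Hi. auto.
Qed.

Lemma pareto_bound Z e : pareto_optimal F n w Z -> (card e <= nl Z)%nat ->
  Se e <= fit F n w Z /\ ((card e < nl Z)%nat -> Se e < fit F n w Z).
Proof.
  intros [HvZ HnZ] Hc. split.
  - apply Rnot_lt_le. intros Hlt. apply HnZ. exists (canon e). split; [apply canon_valid|].
    unfold sdom, wdom. rewrite cplx_le, canon_fit, canon_nl. split; [split|left]; auto; lra.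
  - intros Hlt. apply Rnot_le_lt. intros Hle. apply HnZ. exists (canon e). split; [apply canon_valid|].
    unfold sdom, wdom. rewrite cplx_le, cplx_lt, canon_fit, canon_nl. split; [split|right]; auto; lia.
Qed.

(** Pareto optimal trees have at most [n] leaves: more leaves than variables
    are dominated by the canonical tree of the expressed variables. *)
Lemma pareto_nl X : pareto_optimal F n w X -> (nl X <= n)%nat.
Proof.
  intros [Hv Hn]. destruct (Nat.le_gt_cases (nl X) n) as [|Hgt]; auto. exfalso.
  apply Hn. exists (canon (expressed F X)).
  split; [apply canon_valid|]. pose proof (card_le_n (expressed F X)).
  unfold sdom, wdom. rewrite cplx_le, cplx_lt, canon_fit, canon_nl. unfold Se, fit.
  split; [split|right]; lra || lia.
Qed.

(** Covering every size [0..n] covers the whole front: two Pareto optimal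
    trees of the same size have the same fitness. *)
Lemma covers_all_sizes P : (forall j, (j <= n)%nat -> covered P j) -> covers_front F n w P.
Proof.
  intros H X HX. destruct (H (nl X) (pareto_nl X HX)) as (Z & HZ & [[HvZ HnZ] HnlZ]).
  exists Z. split; auto. unfold objv.
  assert (Hc : cplx Z = cplx X) by (apply cplx_eq; auto). rewrite Hc.
  destruct HX as [HvX HnX].
  destruct (Rtotal_order (fit F n w Z) (fit F n w X)) as [Hl|[He|Hl]].
  - exfalso. apply HnZ. exists X. split; auto. split; [split|left]; lra || lia.
  - rewrite He. auto.
  - exfalso. apply HnX. exists Z. split; auto. split; [split|left]; lra || lia.
Qed.

Lemma none_pareto : pareto_optimal F n w None.
Proof.
  split; [intros l []|]. intros (W & _ & [[_ H2] H3]).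
  assert (HW : cplx W = 0%nat) by (simpl in H2; lia).
  destruct H3 as [H3|H3]; [|simpl in H3; lia].
  destruct W as [t|]; [simpl in HW; pose proof (nsize_pos t); lia|simpl in H3; lra].
Qed.

Lemma weights_antitone i j : (i <= j)%nat -> (j < n)%nat -> w j <= w i.
Proof.
  intros Hij Hj. induction j as [|j IH]; [replace i with 0%nat by lia; lra|].
  destruct (Nat.eq_dec i (S j)) as [->|]; [lra|].
  assert (w (S j) <= w j) by (apply (proj2 Hw); auto). assert (w j <= w i) by (apply IH; lia). lra.
Qed.

Definition remove_var (e : nat -> bool) (u : nat) : nat -> bool :=
  fun i => e i && negb (Nat.eqb i u).

Lemma card_remove e u : (u < n)%nat -> e u = true -> card e = S (card (remove_var e u)).
Proof.
  intros Hu He. unfold card. assert (Hin : In u (seq 0 n)) by (apply in_seq; lia).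
  pose proof (seq_NoDup n 0) as Hd. induction (seq 0 n) as [|a l IH]; [contradiction|].
  inversion Hd as [|? ? Ha Hl]; subst. simpl. unfold remove_var at 1.
  destruct Hin as [<-|Hin].
  - rewrite He, Nat.eqb_refl. simpl. f_equal. f_equal. apply filter_ext_in. intros i Hi.
    unfold remove_var. destruct (Nat.eqb_spec i a); [subst; contradiction|]. rewrite andb_true_r; auto.
  - destruct (Nat.eqb_spec a u); [subst; contradiction|]. rewrite andb_true_r.
    destruct (e a); simpl; auto.
Qed.

Lemma Se_ext e e' : (forall i, (i < n)%nat -> e i = e' i) -> Se e = Se e'.
Proof.
  intros H. unfold Se. rewrite !sumR_lsum. apply lsum_ext. intros i Hi. apply in_seq in Hi.
  rewrite H; auto; lia.
Qed.

Lemma Se_remove e u : (u < n)%nat -> e u = true -> Se e = Se (remove_var e u) + w u.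
Proof.
  intros Hu He. unfold Se. rewrite !sumR_lsum.
  rewrite (lsum_split_point _ _ u (seq_NoDup n 0)) by (apply in_seq; lia). rewrite He.
  assert (E : lsum (seq 0 n) (fun i => if Nat.eqb i u then 0 else if e i then w i else 0)
            = lsum (seq 0 n) (fun i => if remove_var e u i then w i else 0)).
  { apply lsum_ext. intros i _. unfold remove_var. destruct (Nat.eqb i u); simpl;
      [rewrite andb_false_r|rewrite andb_true_r]; auto. }
  rewrite E. lra.
Qed.

Lemma pareto_extend Z Y v : clean_tree n Z -> pareto_optimal F n w Z -> (v < n)%nat ->
  ~ In v (map fst (leaflist Z)) ->
  (forall i, (i < n)%nat -> ~ In i (map fst (leaflist Z)) -> w i <= w v) ->
  clean_tree n Y -> (forall i, In (i, true) (leaflist Y) <-> i = v \/ In (i, true) (leaflist Z)) ->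
  nl Y = S (nl Z) -> pareto_optimal F n w Y.
Proof.
  intros HgZ HPZ Hv Hvn Hmax HgY HY HnY.
  assert (HexY : forall i, expressed F Y i = true <-> i = v \/ In (i, true) (leaflist Z))
    by (intros i; rewrite expressed_iff by apply HgY; apply HY).
  assert (Hfit : fit F n w Y = fit F n w Z + w v).
  { change (Se (expressed F Y) = Se (expressed F Z) + w v).
    rewrite (Se_remove _ v) by (auto; apply HexY; auto). f_equal. apply Se_ext. intros i Hi.
    apply eq_true_iff_eq. unfold remove_var. rewrite andb_true_iff, negb_true_iff, Nat.eqb_neq, HexY.
    rewrite (expressed_iff F Z i) by apply HgZ. split; [intros [[->|] Hne]; tauto|].
    intros Hin. split; auto. intros ->. apply Hvn. apply (in_map fst) in Hin. auto. }
  assert (Hwv : 0 < w v) by (apply (proj1 Hw); auto).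
  split; [exact (proj1 HgY)|]. intros (W & HvW & [[Hf Hc] Hstrict]).
  set (e := expressed F W). pose proof (card_expressed W) as Hce. fold e in Hce.
  apply cplx_le in Hc.
  destruct (classic (exists u, (u < n)%nat /\ e u = true /\
                             (u = v \/ ~ In u (map fst (leaflist Z))))) as [(u & Hu & Heu & Huv)|Hno].
  - (* [W] expresses a variable outside [Z]: trade it for [v] *)
    assert (Hwu : w u <= w v) by (destruct Huv as [->|Huv]; [lra|apply Hmax; auto]).
    pose proof (card_remove e u Hu Heu) as Hc'. pose proof (Se_remove e u Hu Heu) as HS'.
    destruct (pareto_bound Z (remove_var e u) HPZ) as [B1 B2]; [lia|].
    destruct Hstrict as [Hlt|Hlt]; [change (Se e) with (fit F n w W) in HS'; lra|].
    apply cplx_lt in Hlt. specialize (B2 ltac:(lia)). change (Se e) with (fit F n w W) in HS'. lra.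
  - (* [W] only expresses variables of [Z], so it is no fitter than [Z] *)
    assert (Hcard : (card e <= nl Z)%nat).
    { unfold card, nl. rewrite <- (length_map (@fst nat bool)).
      apply NoDup_incl_length; [apply NoDup_filter, seq_NoDup|].
      intros u Hu. apply filter_In in Hu. destruct Hu as [Hu1 Hu2]. apply in_seq in Hu1.
      apply NNPP. intros Hnot. apply Hno. exists u. repeat split; auto. lia. }
    destruct (pareto_bound Z e HPZ Hcard) as [B1 _]. change (Se e) with (fit F n w W) in B1. lra.
Qed.

(** The smallest variable missing from a duplicate-free list of fewer than [n]
    variables; by antitonicity of the weights it is a heaviest missing one. *)
Lemma min_missing (V : list nat) : (length V < n)%nat -> NoDup V ->
  exists v, (v < n)%nat /\ ~ In v V /\ forall i, (i < n)%nat -> ~ In i V -> (v <= i)%nat.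
Proof.
  intros Hl Hd.
  assert (Hex : exists i, (i < n)%nat /\ ~ In i V).
  { apply NNPP. intros Hno. assert (Hincl : incl (seq 0 n) V).
    { intros i Hi. apply in_seq in Hi. apply NNPP. intros H. apply Hno. exists i. split; auto; lia. }
    apply NoDup_incl_length in Hincl; [|apply seq_NoDup]. rewrite length_seq in Hincl. lia. }
  destruct Hex as (i & Hi & HiV). revert Hi HiV.
  induction i as [i IH] using (well_founded_induction lt_wf). intros Hi HiV.
  destruct (classic (exists k, (k < i)%nat /\ ~ In k V)) as [(k & Hk & HkV)|Hno].
  - apply (IH k); auto. lia.
  - exists i. repeat split; auto. intros k Hk HkV. apply Nat.nlt_ge. intros Hki. apply Hno. eauto.
Qed.

End Population.

Lemma INR_pos k : (1 <= k)%nat -> 0 < INR k.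
Proof. intros. apply lt_0_INR. lia. Qed.

Lemma inv_INR_nonneg k : 0 <= / INR k.
Proof. destruct k; [simpl; rewrite Rinv_0; lra|]. left. apply Rinv_0_lt_compat, INR_pos. lia. Qed.

Lemma delete_nonneg X : nonnegd (mut_delete X).
Proof.
  intros pa H. destruct X as [t|]; cbn -[Nat.mul INR] in H; [|destruct H as [<-|[]]; simpl; lra].
  apply in_map_iff in H. destruct H as (k & <- & _). apply inv_INR_nonneg.
Qed.

Lemma delete_mass X : Ex (mut_delete X) (fun _ => 1) = 1.
Proof.
  destruct X as [t|]; [|unfold Ex; simpl; rewrite lsum_cons, lsum_nil; simpl; lra].
  cbn -[INR]. rewrite Ex_uniform, lsum_const, length_seq. pose proof (INR_pos _ (nleaves_pos t)).
  field. lra.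
Qed.

Lemma delete_certain t f :
  (forall a x c Y, leaves t = a ++ x :: c -> leaflist Y = a ++ c -> f Y = 1) ->
  Ex (mut_delete (Some t)) f = 1.
Proof.
  intros Hdel. rewrite <- (delete_mass (Some t)). simpl. rewrite !Ex_uniform. f_equal.
  apply lsum_ext. intros k Hk. apply in_seq in Hk.
  destruct (del_leaf_leaves t k) as (a & x & c & H1 & H2); [lia|]. apply (Hdel a x c); auto.
Qed.

Section Mutation.
Variable n : nat.
Hypothesis Hn : (1 <= n)%nat.

Lemma INR_2n_pos : 0 < INR (2 * n).
Proof. apply INR_pos. lia. Qed.

Lemma subst_nonneg X : nonnegd (mut_subst n X).
Proof.
  intros pa H. destruct X as [t|]; cbn -[Nat.mul INR] in H; [|destruct H as [<-|[]]; simpl; lra].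
  apply in_flat_map in H. destruct H as (k & _ & H). apply in_map_iff in H.
  destruct H as (u & <- & _). simpl. apply Rmult_le_pos; apply inv_INR_nonneg.
Qed.

Lemma insert_nonneg X : nonnegd (mut_insert n X).
Proof.
  intros pa H. destruct X as [t|]; cbn -[Nat.mul INR] in H.
  - apply in_flat_map in H. destruct H as (k & _ & H). apply in_flat_map in H.
    destruct H as (u & _ & H). pose proof (inv_INR_nonneg (nsize t)). pose proof (inv_INR_nonneg (2 * n)).
    destruct H as [<-|[<-|[]]]; cbn [fst]; repeat apply Rmult_le_pos; lra.
  - apply in_map_iff in H. destruct H as (u & <- & _). apply inv_INR_nonneg.
Qed.

Lemma hvl_nonneg X : nonnegd (hvl_prime n X).
Proof.
  intros pa H. unfold hvl_prime in H. apply in_map_iff in H. destruct H as (qa & <- & H). simpl.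
  apply Rmult_le_pos; [unfold third; lra|]. rewrite !in_app_iff in H.
  destruct H as [H|[H|H]];
    [exact (subst_nonneg X qa H)|exact (insert_nonneg X qa H)|exact (delete_nonneg X qa H)].
Qed.

Lemma Ex_hvl X f : Ex (hvl_prime n X) f =
  third * (Ex (mut_subst n X) f + Ex (mut_insert n X) f + Ex (mut_delete X) f).
Proof. unfold hvl_prime. rewrite Ex_map_scale, !Ex_app. ring. Qed.

Lemma subst_mass X : Ex (mut_subst n X) (fun _ => 1) = 1.
Proof.
  destruct X as [t|]; [|unfold Ex; simpl; rewrite lsum_cons, lsum_nil; simpl; lra].
  cbn -[Nat.mul INR]. rewrite Ex_flat_map. pose proof INR_2n_pos. pose proof (INR_pos _ (nleaves_pos t)).
  rewrite (lsum_ext _ _ (fun _ => / INR (nleaves t))).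
  - rewrite lsum_const, length_seq. field. lra.
  - intros k _. rewrite Ex_uniform, lsum_const, length_terms. field. lra.
Qed.

Lemma insert_mass X : Ex (mut_insert n X) (fun _ => 1) = 1.
Proof.
  pose proof INR_2n_pos. destruct X as [t|]; cbn -[Nat.mul INR].
  - rewrite Ex_flat_map. pose proof (INR_pos _ (nsize_pos t)).
    rewrite (lsum_ext _ _ (fun _ => / INR (nsize t))).
    + rewrite lsum_const, length_seq. field. lra.
    + intros k _. rewrite Ex_flat_map, (lsum_ext _ _ (fun _ => / INR (nsize t) * / INR (2 * n))).
      * rewrite lsum_const, length_terms. field. lra.
      * intros u _. unfold Ex. rewrite !lsum_cons, lsum_nil. cbn [fst]. field. lra.
  - rewrite Ex_uniform, lsum_const, length_terms. field. lra.
Qed.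

Lemma hvl_mass X : Ex (hvl_prime n X) (fun _ => 1) = 1.
Proof. rewrite Ex_hvl, subst_mass, insert_mass, delete_mass. unfold third. field. Qed.

Lemma hvl_ge_insert X f : (forall Y, 0 <= f Y) -> third * Ex (mut_insert n X) f <= Ex (hvl_prime n X) f.
Proof.
  intros Hf. rewrite Ex_hvl.
  pose proof (Ex_ge0 _ f (subst_nonneg X) (fun pa _ => Hf (snd pa))).
  pose proof (Ex_ge0 _ f (delete_nonneg X) (fun pa _ => Hf (snd pa))). unfold third in *. lra.
Qed.

Lemma hvl_ge_delete X f : (forall Y, 0 <= f Y) -> third * Ex (mut_delete X) f <= Ex (hvl_prime n X) f.
Proof.
  intros Hf. rewrite Ex_hvl.
  pose proof (Ex_ge0 _ f (subst_nonneg X) (fun pa _ => Hf (snd pa))).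
  pose proof (Ex_ge0 _ f (insert_nonneg X) (fun pa _ => Hf (snd pa))). unfold third in *. lra.
Qed.

(** Insert adds the positive literal [x_v] with probability at least [1/(2n)]
    (the choice of [u]; every node and side is fine). *)
Lemma insert_lower X f v : (v < n)%nat -> (forall Y, 0 <= f Y) ->
  (forall a c Y, leaflist X = a ++ c -> leaflist Y = a ++ (v, true) :: c -> f Y = 1) ->
  / INR (2 * n) <= Ex (mut_insert n X) f.
Proof.
  intros Hv Hf Hins. pose proof INR_2n_pos. pose proof (Rinv_0_lt_compat _ H) as Hinv.
  assert (Hterm : forall g : lit -> R, (forall u, 0 <= g u) -> g (v, true) <= lsum (terms n) g).
  { intros g Hg. apply lsum_ge_term; auto. apply terms_in; auto. }
  destruct X as [t|]; cbn -[Nat.mul INR].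
  - rewrite Ex_flat_map. pose proof (INR_pos _ (nsize_pos t)).
    apply Rle_trans with (lsum (seq 0 (nsize t)) (fun _ => / INR (nsize t) * / INR (2 * n))).
    { rewrite lsum_const, length_seq. right. field. lra. }
    apply lsum_le. intros k Hk. apply in_seq in Hk. rewrite Ex_flat_map.
    assert (Hval : forall b, f (Some (at_node t k (insf (v, true) b))) = 1).
    { intros b. destruct (at_node_ins t k (v, true) b) as (a & c & H1 & H2); [lia|].
      apply (Hins a c); auto. }
    eapply Rle_trans; [|apply Hterm].
    + unfold Ex. rewrite !lsum_cons, lsum_nil. cbn [fst snd].
      pose proof (Hval true) as E1. pose proof (Hval false) as E2. cbv beta iota delta [insf] in E1, E2.
      rewrite E1, E2. lra.
    + intros u. apply Ex_ge0; [intros pa [<-|[<-|[]]]; cbn [fst]|intros; auto];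
        pose proof (inv_INR_nonneg (nsize t)); repeat apply Rmult_le_pos; lra.
  - rewrite Ex_uniform. rewrite <- (Rmult_1_r (/ INR (2 * n))) at 1.
    apply Rmult_le_compat_l; [lra|]. rewrite <- (Hins [] [] (Some (Leaf (v, true)))); auto.
    apply (Hterm (fun u => f (Some (Leaf u)))). auto.
Qed.
End Mutation.

Section Iteration.
Variable F : fitness.
Variable n : nat.
Variable w : nat -> R.
Hypothesis Hw : weights_ok n w.
Hypothesis Hn : (1 <= n)%nat.

Lemma Ex_step P f : Ex (smo_step F n w P) f =
  / INR (length P) * lsum P (fun X => Ex (hvl_prime n X) (fun Y => f (update F n w P Y))).
Proof.
  unfold smo_step. rewrite Ex_dbind, Ex_uniform. f_equal. apply lsum_ext. intros X _.
  apply (Ex_map (update F n w P) (hvl_prime n X) f).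
Qed.

Lemma step_nonneg P : nonnegd (smo_step F n w P).
Proof.
  unfold smo_step, dbind. intros qP H. apply in_flat_map in H. destruct H as (pa & Hpa & H).
  apply in_map_iff in Hpa. destruct Hpa as (X & <- & HX). apply in_map_iff in H.
  destruct H as (qb & <- & H). apply in_map_iff in H. destruct H as (qy & <- & H).
  apply Rmult_le_pos; [apply inv_INR_nonneg|exact (hvl_nonneg n X qy H)].
Qed.

Lemma step_mass P : P <> [] -> Ex (smo_step F n w P) (fun _ => 1) = 1.
Proof.
  intros Hne. rewrite Ex_step, (lsum_ext _ _ (fun _ => 1)) by (intros; apply (hvl_mass n Hn)).
  rewrite lsum_const. assert (0 < INR (length P)) by (apply INR_pos; destruct P; [congruence|simpl; lia]).
  field. lra.
Qed.

Lemma step_support P qP : In qP (smo_step F n w P) ->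
  exists X Y, In X P /\ leaf_step n X Y /\ snd qP = update F n w P Y.
Proof.
  unfold smo_step, dbind. intros H. apply in_flat_map in H. destruct H as (pa & Hpa & H).
  apply in_map_iff in Hpa. destruct Hpa as (X & <- & HX). apply in_map_iff in H.
  destruct H as (qb & <- & H). apply in_map_iff in H. destruct H as (qy & <- & H).
  exists X, (snd qy). repeat split; auto. apply (hvl_leaf_step n X qy H).
Qed.

Lemma step_lower P Z h : In Z P -> (forall Y, 0 <= h Y) ->
  / INR (length P) * Ex (hvl_prime n Z) (fun Y => h (update F n w P Y)) <= Ex (smo_step F n w P) h.
Proof.
  intros HZ Hh. rewrite Ex_step. apply Rmult_le_compat_l; [apply inv_INR_nonneg|].
  apply (lsum_ge_term P (fun X => Ex (hvl_prime n X) (fun Y => h (update F n w P Y)))); auto.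
  intros X _. apply Ex_ge0; [apply hvl_nonneg|auto].
Qed.

(** ** The potential *)
Definition min_size (P : list stree) : nat := fold_right (fun Z m => Nat.min (nl Z) m) n P.

Lemma min_size_le P Z : In Z P -> (min_size P <= nl Z)%nat.
Proof.
  induction P as [|X P IH]; simpl; intros H; [contradiction|].
  destruct H as [->|H]; [|specialize (IH H)]; lia.
Qed.

Lemma min_size_le_n P : (min_size P <= n)%nat.
Proof. induction P; simpl; lia. Qed.

Lemma min_size_attained P : P <> [] -> (forall Z, In Z P -> (nl Z <= n)%nat) ->
  exists Z, In Z P /\ nl Z = min_size P.
Proof.
  induction P as [|X P IH]; intros Hne Hb; [congruence|]. simpl.
  destruct P as [|Y P].
  - exists X. split; [left; auto|]. simpl. specialize (Hb X (or_introl eq_refl)). lia.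
  - destruct IH as (Z & HZ & HZe); [discriminate|intros; apply Hb; right; auto|].
    destruct (Nat.le_gt_cases (nl X) (min_size (Y :: P))).
    + exists X. split; [left; auto|lia].
    + exists Z. split; [right; auto|]. rewrite HZe. lia.
Qed.

Definition ncovered (P : list stree) : nat :=
  length (filter (fun j => decb (covered F n w P j)) (seq 0 (S n))).

Lemma ncovered_le P : (ncovered P <= S n)%nat.
Proof. unfold ncovered. rewrite <- (length_seq (S n) 0) at 2. apply filter_length_le. Qed.

Lemma ncovered_strict P P' j0 : (forall j, covered F n w P j -> covered F n w P' j) ->
  (j0 <= n)%nat -> ~ covered F n w P j0 -> covered F n w P' j0 -> (S (ncovered P) <= ncovered P')%nat.
Proof.
  intros Hcov Hj0 Hn0 Hy0. unfold ncovered.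
  set (L := filter (fun j => decb (covered F n w P j)) (seq 0 (S n))).
  apply (NoDup_incl_length (l := j0 :: L)).
  - constructor; [|apply NoDup_filter, seq_NoDup]. intros Hin. apply filter_In in Hin.
    destruct Hin as [_ Hin]. apply (proj1 (decb_true _)) in Hin. contradiction.
  - intros j [<-|Hj]; apply filter_In; [split; [apply in_seq; lia|apply decb_true; auto]|].
    apply filter_In in Hj. destruct Hj as [Hj Hc]. apply (proj1 (decb_true _)) in Hc.
    split; auto. apply decb_true; auto.
Qed.

Lemma ncovered_mono P P' : (forall j, covered F n w P j -> covered F n w P' j) ->
  (ncovered P <= ncovered P')%nat.
Proof.
  intros Hcov. unfold ncovered. apply NoDup_incl_length; [apply NoDup_filter, seq_NoDup|].
  intros j Hj. apply filter_In in Hj. destruct Hj as [Hj Hc]. apply (proj1 (decb_true _)) in Hc.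
  apply filter_In. split; auto. apply decb_true; auto.
Qed.

Definition potential (P : list stree) : R :=
  INR (3 * S n) * INR (min_size P) + INR (6 * n * S n) * (INR (S n) - INR (ncovered P)).

Lemma potential_ge0 P : 0 <= potential P.
Proof.
  unfold potential. pose proof (le_INR _ _ (ncovered_le P)). pose proof (pos_INR (min_size P)).
  pose proof (pos_INR (3 * S n)). pose proof (pos_INR (6 * n * S n)). nra.
Qed.

(** The potential never exceeds [3(n+1) n + 6n(n+1)^2 <= 30 n^3]. *)
Lemma potential_le P : potential P <= 30 * INR n ^ 3.
Proof.
  unfold potential. pose proof (le_INR _ _ (min_size_le_n P)). pose proof (pos_INR (ncovered P)).
  assert (H1 : 1 <= INR n) by (apply (le_INR 1); auto). rewrite !mult_INR.
  replace (INR 3) with 3 by (simpl; lra). replace (INR 6) with 6 by (simpl; lra). rewrite S_INR.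
  assert ((INR n + 1) * INR (min_size P) <= 2 * INR n ^ 2) by nra.
  assert (INR n ^ 2 <= INR n ^ 3) by nra.
  assert (INR n * (INR n + 1) * (INR n + 1) <= 4 * INR n ^ 3) by nra.
  assert (0 <= INR n * (INR n + 1) * INR (ncovered P)) by (apply Rmult_le_pos; nra).
  nra.
Qed.

Lemma step_facts P qP : pop_inv n P -> In qP (smo_step F n w P) ->
  pop_inv n (snd qP) /\ (min_size (snd qP) <= min_size P)%nat /\
  (forall j, covered F n w P j -> covered F n w (snd qP) j).
Proof.
  intros HI H. destruct (step_support P qP H) as (X & Y & HX & Hc & ->).
  pose proof HI as (Hne & Hg & _).
  assert (HvY : valid n Y) by (apply (valid_leaf_step n X); auto; exact (proj1 (Hg X HX))).
  split; [apply (pop_inv_update F n w Hw P X); auto|split].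
  - destruct (min_size_attained P Hne) as (Z0 & HZ0 & HZe); [intros; apply clean_tree_nl; auto|].
    destruct (update_keep F n w P Y Z0 HZ0) as [H1|[H1 [_ H2]]].
    + rewrite <- HZe. apply min_size_le; auto.
    + apply cplx_le in H2. pose proof (min_size_le _ _ H1). lia.
  - intros j. apply covered_update; auto.
Qed.

Lemma potential_diff P P' : potential P - potential P' =
  INR (3 * S n) * (INR (min_size P) - INR (min_size P')) +
  INR (6 * n * S n) * (INR (ncovered P') - INR (ncovered P)).
Proof. unfold potential. ring. Qed.

Lemma pop_size_pos P : pop_inv n P -> 0 < INR (length P).
Proof. intros [Hne _]. apply INR_pos. destruct P; [congruence|simpl; lia]. Qed.

Lemma pop_ratio P : pop_inv n P -> 1 <= INR (S n) * / INR (length P).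
Proof.
  intros HI. pose proof (le_INR _ _ (pop_inv_length n P HI)). pose proof (pop_size_pos P HI).
  apply (Rmult_le_reg_r (INR (length P))); auto. rewrite Rmult_assoc, Rinv_l; lra.
Qed.

(** Phase 1: while the empty tree is missing, deleting any leaf of a smallest
    tree (probability at least [1/(3|P|)]) gives a smaller, hence accepted, tree. *)
Lemma drift_shrink P : pop_inv n P -> (0 < min_size P)%nat ->
  Ex (smo_step F n w P) potential <= potential P - 1.
Proof.
  intros HI Hpos. pose proof HI as (Hne & Hg & _).
  destruct (min_size_attained P Hne) as (Z & HZ & HZe); [intros; apply clean_tree_nl; auto|].
  destruct Z as [t|]; [|unfold nl in HZe; simpl in HZe; lia].
  set (ind := fun P' => if decb (min_size P' < min_size P)%nat then 1 else 0).
  assert (Hind0 : forall P', 0 <= ind P') by (intros; unfold ind; destruct decb; lra).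
  assert (Hdel : third <= Ex (hvl_prime n (Some t)) (fun Y => ind (update F n w P Y))).
  { rewrite <- (Rmult_1_r third), <- (delete_certain t (fun Y => ind (update F n w P Y))).
    - apply hvl_ge_delete. auto.
    - intros a x c Y H1 H2.
      assert (HnY : (nl Y < min_size P)%nat)
        by (rewrite <- HZe; unfold nl; simpl; rewrite H1, H2, !length_app; simpl; lia).
      assert (Hacc : accepted F n w P Y).
      { intros (W & HW & [[_ Hs] _]). apply cplx_le in Hs. pose proof (min_size_le P W HW). lia. }
      pose proof (min_size_le _ _ (update_accepted F n w P Y Hacc)).
      unfold ind. rewrite (proj2 (decb_true _)); auto. lia. }
  apply expected_decrease with ind (INR (3 * S n)) (/ INR (length P) * third).
  - apply step_nonneg.
  - apply step_mass; auto.
  - apply pos_INR.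
  - pose proof (pop_ratio P HI). rewrite mult_INR. replace (INR 3) with 3 by (simpl; lra).
    unfold third. lra.
  - intros qP HqP. destruct (step_facts P qP HI HqP) as (_ & Hmin & Hcov).
    pose proof (le_INR _ _ (ncovered_mono _ _ Hcov)). pose proof (potential_diff P (snd qP)).
    pose proof (pos_INR (6 * n * S n)). pose proof (pos_INR (3 * S n)).
    unfold ind. destruct (decb _) eqn:E.
    + apply (proj1 (decb_true _)) in E. pose proof (le_INR _ _ E). rewrite S_INR in *. nra.
    + pose proof (le_INR _ _ Hmin). nra.
  - eapply Rle_trans; [|apply (step_lower P (Some t) ind HZ Hind0)].
    apply Rmult_le_compat_l; [apply inv_INR_nonneg|auto].
Qed.

Lemma next_gap P : covered F n w P 0 -> ~ covers_front F n w P ->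
  exists k, (k < n)%nat /\ covered F n w P k /\ ~ covered F n w P (S k).
Proof.
  intros H0 Hcov.
  assert (Hj : exists j, (j <= n)%nat /\ ~ covered F n w P j).
  { apply NNPP. intros Hno. apply Hcov, covers_all_sizes. intros j Hj. apply NNPP. eauto. }
  destruct Hj as (j & Hj & Hjc). induction j as [|j IH]; [contradiction|].
  destruct (classic (covered F n w P j)) as [Hc|Hc]; [exists j; repeat split; auto; lia|].
  apply IH; auto; lia.
Qed.

Lemma insertion_covers P Z k v : pop_inv n P -> In Z P -> opt F n w k Z -> (v < n)%nat ->
  ~ In v (map fst (leaflist Z)) ->
  (forall i, (i < n)%nat -> ~ In i (map fst (leaflist Z)) -> (v <= i)%nat) ->
  forall a c Y, leaflist Z = a ++ c -> leaflist Y = a ++ (v, true) :: c ->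
  covered F n w (update F n w P Y) (S k).
Proof.
  intros (_ & Hg & _) HZ [HPZ HnZ] Hv HvZ Hvmin a c Y H1 H2.
  assert (HgZ := Hg Z HZ).
  assert (HgY : clean_tree n Y)
    by (unfold clean_tree in *; rewrite H2; rewrite H1 in HgZ, HvZ; apply clean_insert; auto).
  assert (HnY : nl Y = S (nl Z)) by (unfold nl; rewrite H1, H2, !length_app; simpl; lia).
  assert (HPY : pareto_optimal F n w Y).
  { apply (pareto_extend F n w Hw Z Y v); auto.
    - intros i Hi Hin. apply (weights_antitone n w Hw); auto.
    - intros i. rewrite H1, H2, !in_app_iff. simpl. split; [intros [|[[= ->]|]]|intros [->|[|]]]; auto. }
  assert (Hacc : accepted F n w P Y)
    by (intros (W & HW & Hs); apply (proj2 HPY); exists W; split; auto; exact (proj1 (Hg W HW))).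
  exists Y. split; [apply update_accepted; auto|split; auto; lia].
Qed.

(** Phase 2: once the empty tree is present, some size [k] is covered but
    [k+1] is not; a well-chosen insertion (probability at least [1/(6n|P|)])
    covers [k+1]. *)
Lemma drift_cover P : pop_inv n P -> min_size P = 0%nat -> ~ covers_front F n w P ->
  Ex (smo_step F n w P) potential <= potential P - 1.
Proof.
  intros HI Hm0 Hcov. pose proof HI as (Hne & Hg & _).
  destruct (min_size_attained P Hne) as (E & HE & HEe); [intros; apply clean_tree_nl; auto|].
  rewrite Hm0 in HEe. apply nl_zero in HEe. subst E.
  assert (Hc0 : covered F n w P 0)
    by (exists None; split; [auto|split; [apply none_pareto|reflexivity]]).
  destruct (next_gap P Hc0 Hcov) as (k & Hk & (Z & HZ & HoZ) & Hnk).
  assert (HgZ := Hg Z HZ).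
  destruct (min_missing n (map fst (leaflist Z))) as (v & Hv & HvZ & Hvmin).
  { rewrite length_map. change (nl Z < n)%nat. rewrite (proj2 HoZ). auto. }
  { exact (proj2 (proj2 HgZ)). }
  set (ind := fun P' => if decb (covered F n w P' (S k)) then 1 else 0).
  assert (Hind0 : forall P', 0 <= ind P') by (intros; unfold ind; destruct decb; lra).
  assert (Hins : third * / INR (2 * n) <= Ex (hvl_prime n Z) (fun Y => ind (update F n w P Y))).
  { eapply Rle_trans; [|apply hvl_ge_insert; auto]. apply Rmult_le_compat_l; [unfold third; lra|].
    apply (insert_lower n Hn Z _ v); auto. intros a c Y H1 H2.
    unfold ind. rewrite (proj2 (decb_true _)); auto.
    apply (insertion_covers P Z k v HI HZ HoZ Hv HvZ Hvmin a c Y H1 H2). }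
  apply expected_decrease with ind (INR (6 * n * S n)) (/ INR (length P) * (third * / INR (2 * n))).
  - apply step_nonneg.
  - apply step_mass; auto.
  - apply pos_INR.
  - pose proof (pop_ratio P HI). pose proof (pop_size_pos P HI). pose proof (INR_pos n Hn).
    rewrite !mult_INR. replace (INR 6) with 6 by (simpl; lra). replace (INR 2) with 2 by (simpl; lra).
    unfold third. replace (6 * INR n * INR (S n) * (/ INR (length P) * (/ 3 * / (2 * INR n))))
      with (INR (S n) * / INR (length P)) by (field; lra). lra.
  - intros qP HqP. destruct (step_facts P qP HI HqP) as (_ & Hmin & Hcv).
    assert (Hm' : min_size (snd qP) = 0%nat) by lia.
    pose proof (potential_diff P (snd qP)) as Hdiff. rewrite Hm0, Hm' in Hdiff.
    pose proof (pos_INR (6 * n * S n)). pose proof (le_INR _ _ (ncovered_mono _ _ Hcv)).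
    unfold ind. destruct (decb _) eqn:E.
    + apply (proj1 (decb_true _)) in E.
      pose proof (le_INR _ _ (ncovered_strict _ _ (S k) Hcv ltac:(lia) Hnk E)).
      rewrite S_INR in *. nra.
    + nra.
  - eapply Rle_trans; [|apply (step_lower P Z ind HZ Hind0)].
    apply Rmult_le_compat_l; [apply inv_INR_nonneg|auto].
Qed.

Lemma drift P : pop_inv n P -> ~ covers_front F n w P ->
  Ex (smo_step F n w P) potential <= potential P - 1.
Proof.
  intros HI Hcov. destruct (Nat.eq_dec (min_size P) 0) as [H0|H0];
    [apply drift_cover|apply drift_shrink]; auto; lia.
Qed.
End Iteration.

(** * Additive drift *)

Section AdditiveDrift.
Variable St : Type.
Variable d : nat -> Defs.dist St.
Variable k : St -> Defs.dist St.
Variable inv : St -> Prop.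
Variables h cost : St -> R.
Hypothesis Hd_step : forall t, d (S t) = dbind (d t) k.
Hypothesis Hd0 : nonnegd (d 0) /\ forall pa, In pa (d 0) -> inv (snd pa).
Hypothesis Hk : forall s, inv s -> nonnegd (k s) /\ forall pa, In pa (k s) -> inv (snd pa).
Hypothesis Hdrift : forall s, inv s -> Ex (k s) h <= h s - cost s.
Hypothesis Hh : forall s, 0 <= h s.

Lemma reachable_inv t : nonnegd (d t) /\ forall pa, In pa (d t) -> inv (snd pa).
Proof.
  induction t as [|t [IH1 IH2]]; auto. rewrite Hd_step. unfold dbind.
  split; intros qb H; apply in_flat_map in H; destruct H as (pa & Hpa & H);
    apply in_map_iff in H; destruct H as (q & <- & H);
    destruct (Hk (snd pa) (IH2 pa Hpa)) as [Hk1 Hk2]; cbn [fst snd].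
  - apply Rmult_le_pos; [apply IH1|apply Hk1]; auto.
  - apply Hk2; auto.
Qed.

Theorem additive_drift N : sumR N (fun t => Ex (d t) cost) <= Ex (d 0) h.
Proof.
  assert (Hgen : sumR N (fun t => Ex (d t) cost) + Ex (d N) h <= Ex (d 0) h).
  { induction N as [|N IH]; [unfold sumR; simpl; lra|].
    rewrite sumR_S, Hd_step, Ex_dbind. destruct (reachable_inv N) as [Hnn Hinv].
    assert (Hstep : Ex (d N) (fun s => Ex (k s) h) <= Ex (d N) (fun s => h s + (-1) * cost s)).
    { apply Ex_le; auto. intros pa Hpa. specialize (Hdrift (snd pa) (Hinv pa Hpa)). lra. }
    unfold Ex at 3 in Hstep.
    rewrite (lsum_ext _ _ (fun pa => fst pa * h (snd pa) + (-1) * (fst pa * cost (snd pa))))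
      in Hstep by (intros; ring).
    rewrite lsum_plus, lsum_scale in Hstep. fold (Ex (d N) h) (Ex (d N) cost) in Hstep. lra. }
  pose proof (Ex_ge0 (d N) h (proj1 (reachable_inv N)) (fun pa _ => Hh (snd pa))). lra.
Qed.
End AdditiveDrift.

Section Run.
Variable F : fitness.
Variable n : nat.
Variable w : nat -> R.
Hypothesis Hw : weights_ok n w.
Hypothesis Hn : (1 <= n)%nat.

(** A state is a population with the flag "front covered so far"; after the
    front is covered the potential and the cost vanish. *)
Definition next_state (s : list stree * bool) : Defs.dist (list stree * bool) :=
  map (fun qP : R * list stree => (fst qP, (snd qP, orb (snd s) (coveredb F n w (snd qP)))))
      (smo_step F n w (fst s)).
Definition state_pot (s : list stree * bool) : R := if snd s then 0 else potential F n w (fst s).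
Definition not_done (s : list stree * bool) : R := if snd s then 0 else 1.
Definition state_inv (s : list stree * bool) : Prop :=
  pop_inv n (fst s) /\ (snd s = false -> coveredb F n w (fst s) = false).

Lemma next_state_inv s : state_inv s ->
  nonnegd (next_state s) /\ forall pa, In pa (next_state s) -> state_inv (snd pa).
Proof.
  intros [HI _]. unfold next_state. split; intros pa H; apply in_map_iff in H;
    destruct H as (qP & <- & HqP); simpl.
  - apply (step_nonneg F n w _ _ HqP).
  - split; [apply (step_facts F n w Hw Hn _ _ HI HqP)|].
    intros Hb. apply orb_false_iff in Hb. tauto.
Qed.

Lemma next_state_drift s : state_inv s -> Ex (next_state s) state_pot <= state_pot s - not_done s.
Proof.
  intros [HI Hc]. unfold next_state. rewrite (Ex_map (fun P' => (P', snd s || coveredb F n w P'))).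
  destruct s as [P [|]]; unfold state_pot, not_done; simpl in *.
  - rewrite Ex_zero. lra.
  - apply Rle_trans with (Ex (smo_step F n w P) (potential F n w)).
    + apply Ex_le; [apply step_nonneg|]. intros pa _.
      destruct (coveredb F n w (snd pa)); [apply potential_ge0|apply Rle_refl].
    + apply (drift F n w Hw Hn); auto. apply (proj1 (decb_false _)). auto.
Qed.

Lemma prob_not_done_Ex X0 t :
  prob_not_done F n w X0 t = Ex (state_dist F n w X0 t) not_done.
Proof.
  unfold prob_not_done, Ex, lsum. induction (state_dist F n w X0 t) as [|s l IH]; simpl; auto.
  rewrite IH. unfold not_done. destruct (snd (snd s)); ring.
Qed.

Lemma expected_time_bound X0 N : clean_tree n X0 ->
  exp_time_partial F n w X0 N <= 30 * INR n ^ 3.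
Proof.
  intros HX0. unfold exp_time_partial.
  rewrite sumR_lsum, (lsum_ext _ _ (fun t => Ex (state_dist F n w X0 t) not_done))
    by (intros; apply prob_not_done_Ex).
  rewrite <- sumR_lsum.
  eapply Rle_trans; [apply (additive_drift _ (state_dist F n w X0) next_state state_inv state_pot)|].
  - reflexivity.
  - split; intros pa [<-|[]]; simpl; [lra|]. split; auto.
    split; [discriminate|split; [intros Z [<-|[]]; auto|repeat constructor; auto]].
  - apply next_state_inv.
  - apply next_state_drift.
  - intros [P [|]]; unfold state_pot; simpl; [lra|apply potential_ge0].
  - cbn [state_dist]. unfold Ex. rewrite lsum_cons, lsum_nil. unfold state_pot. cbn [fst snd].
    pose proof (potential_le F n w Hn [X0]). pose proof (potential_ge0 F n w [X0]).
    destruct (coveredb F n w [X0]); lra.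
Qed.
End Run.

Theorem theorem6 :
  exists c : R, 0 < c /\
    forall (F : fitness) (n : nat) (w : nat -> R) (X0 : stree),
      (1 <= n)%nat -> weights_ok n w ->
      valid n X0 -> nonredundant F n X0 ->
      forall N : nat, exp_time_partial F n w X0 N <= c * INR n ^ 3.
Proof.
  exists 30. split; [lra|]. intros F n w X0 Hn Hw Hv Hnr N.
  apply expected_time_bound; auto. apply nonredundant_clean with F; auto.
Qed.
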